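(* Let $p\geq 3$. Every $p$-regular hamiltonian graph is linked to a $p$-hamiltonian graph. Every $p$-regular hamiltonian 3-edge-connected graph is 3-linked to a 3-edge-connected $p$-hamiltonian graph.
   Context: All graphs are finite and connected; loops and multiple edges are allowed. Valency counts half-edges (a loop counts twice); $p$-regular means every vertex has valency $p$. A graph is hamiltonian if it has at least 2 vertices and contains a cycle (connected 2-regular subgraph) through every vertex; $p$-hamiltonian means $p$-regular, hamiltonian and loopless. $\Gamma/e$ denotes contraction of the edge $e$. Strongly linked: there are non-loop edges $e_i\in E(\Gamma_i)$ and an isomorphism $\Gamma_1/e_1\cong\Gamma_2/e_2$ carrying the image vertex of $e_1$ to that of $e_2$. Linked: joined by a finite chain of consecutively strongly linked graphs. 3-edge-connected: at least one vertex and connected after removal of any fewer than 3 edges. 3-linked: linked through a chain of 3-edge-connected graphs. *)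

From mathcomp Require Import all_boot.
Set Implicit Arguments. Unset Strict Implicit. Unset Printing Implicit Defensive.

(* A finite multigraph: finite vertex set, finite edge set, and each edge has
   two end-vertices (an ordered pair, the orientation being irrelevant: all
   notions below are invariant under swapping). *)
Record graph := Graph {
  gV : finType;
  gE : finType;
  ends : gE -> gV * gV
}.

Definition is_loop (G : graph) (e : gE G) : bool := (ends e).1 == (ends e).2.

Definition loopless (G : graph) : Prop := forall e : gE G, ~~ is_loop e.

Definition adj (G : graph) : rel (gV G) :=
  fun x y => [exists e : gE G, (ends e == (x, y)) || (ends e == (y, x))].

Definition connected (G : graph) : Prop :=
  0 < #|gV G| /\ forall x y : gV G, connect (@adj G) x y.

(* valency counts half-edges; a loop counts twice *)
Definition valency (G : graph) (x : gV G) : nat :=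
  #|[set e : gE G | (ends e).1 == x]| + #|[set e : gE G | (ends e).2 == x]|.

Definition regular (p : nat) (G : graph) : Prop :=
  forall x : gV G, valency x = p.

Definition subgraph (G : graph) (C : {set gE G}) : graph :=
  @Graph (gV G) {e : gE G | e \in C} (fun e => ends (val e)).

(* hamiltonian: >= 2 vertices and a cycle (connected 2-regular subgraph)
   through every vertex, i.e. a connected 2-regular spanning subgraph *)
Definition hamiltonian (G : graph) : Prop :=
  1 < #|gV G| /\
  exists C : {set gE G}, connected (subgraph C) /\ regular 2 (subgraph C).

Definition p_hamiltonian (p : nat) (G : graph) : Prop :=
  regular p G /\ hamiltonian G /\ loopless G.

Definition three_edge_connected (G : graph) : Prop :=
  0 < #|gV G| /\
  forall S : {set gE G}, #|S| < 3 -> connected (subgraph (~: S)).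

(* Contraction of a non-loop edge e with ends (u, v): the vertex v is merged
   into u, e is deleted, all other edges are kept (parallel copies of e become
   loops at u).  The image vertex of e is u. *)
Section Contract.
Variables (G : graph) (e : gE G) (He : (ends e).1 != (ends e).2).

Definition cV : finType := {x : gV G | x != (ends e).2}.
Definition cE : finType := {f : gE G | f != e}.
Definition contract_vertex : cV := exist _ (ends e).1 He.
Definition cmap (x : gV G) : cV := odflt contract_vertex (insub x).
Definition contract : graph :=
  @Graph cV cE (fun f => (cmap (ends (val f)).1, cmap (ends (val f)).2)).
End Contract.

Definition iso_at (G H : graph) (a : gV G) (b : gV H) : Prop :=
  exists (fV : gV G -> gV H) (fE : gE G -> gE H),
    [/\ bijective fV, bijective fE,
        forall e : gE G,
          ends (fE e) = (fV (ends e).1, fV (ends e).2) \/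
          ends (fE e) = (fV (ends e).2, fV (ends e).1)
      & fV a = b].

Definition strongly_linked (G1 G2 : graph) : Prop :=
  exists (e1 : gE G1) (H1 : (ends e1).1 != (ends e1).2)
         (e2 : gE G2) (H2 : (ends e2).1 != (ends e2).2),
    @iso_at (contract H1) (contract H2) (contract_vertex H1) (contract_vertex H2).

Inductive chain (P : graph -> Prop) : graph -> graph -> Prop :=
| chain_refl G : P G -> chain P G G
| chain_step G H K : P G -> strongly_linked G H -> chain P H K -> chain P G K.

Definition linked (G H : graph) : Prop := chain connected G H.
Definition three_linked (G H : graph) : Prop := chain three_edge_connected G H.

(* Let C be a hamiltonian cycle of a p-regular graph and l a loop at x.
   C has a non-loop edge e with ends x and y.  At both x and y there are
   p - 2 half-edges off C; l supplies two of them at x and none at y, so some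
   edge h off C has an end at y and is a loop or avoids x.  Turning l into an
   edge xy and moving that end of h from y to x keeps every valency and C,
   strictly decreases the number of loops, and does not change the graph
   obtained by contracting e.  Removing a set S of edges from the new graph
   leaves it at least as connected as removing S, with l traded for h, from
   the old one, so connectivity and 3-edge-connectivity survive.  Iterating
   removes every loop. *)

From mathcomp Require Import all_boot.
From mathcomp Require Import zify.
From Stdlib Require Import FunctionalExtensionality.
Set Implicit Arguments. Unset Strict Implicit. Unset Printing Implicit Defensive.

Definition end_count (V : eqType) (x : V) (ab : V * V) : nat :=
  (ab.1 == x) + (ab.2 == x).

Lemma end_count_gt0 (V : eqType) (x : V) ab :
  (0 < end_count x ab) = (ab.1 == x) || (ab.2 == x).
Proof. by rewrite /end_count; case: (ab.1 == x); case: (ab.2 == x). Qed.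

Lemma end_count_nonloop (V : eqType) (z : V) ab : ab.1 != ab.2 -> end_count z ab <= 1.
Proof.
case: ab => a b; rewrite /end_count /=.
by case: (eqVneq a z) => [->|_]; [rewrite eq_sym => /negbTE -> | case: (b == z)].
Qed.

Lemma valencyE (G : graph) (x : gV G) :
  valency x = \sum_(e : gE G) end_count x (ends e).
Proof.
rewrite /valency -!sum1dep_card [X in X + _]big_mkcond [X in _ + X]big_mkcond.
rewrite -big_split /=.
by apply: eq_bigr => e _; rewrite /end_count; case: eqP; case: eqP.
Qed.

Lemma valency_subgraph (G : graph) (C : {set gE G}) (x : gV G) :
  valency (G := subgraph C) x = \sum_(e in C) end_count x (ends e).
Proof. by rewrite valencyE [RHS]big_sub. Qed.

Definition loops (G : graph) : {set gE G} := [set e | is_loop e].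

Lemma adj_sym (G : graph) : symmetric (@adj G).
Proof.
by move=> x y; apply/existsP/existsP => -[e He]; exists e; rewrite orbC.
Qed.

Lemma connect_adjC (G : graph) (x y : gV G) :
  connect (@adj G) x y = connect (@adj G) y x.
Proof. exact: (sym_connect_sym (@adj_sym G)). Qed.

Lemma subgraph_adj_ends (G : graph) (C : {set gE G}) (e : gE G) :
  e \in C -> adj (G := subgraph C) (ends e).1 (ends e).2.
Proof.
by move=> eC; apply/existsP; exists (exist _ e eC); rewrite /= -surjective_pairing eqxx.
Qed.

Lemma connected_reroute (V E1 E2 : finType) (en1 : E1 -> V * V) (en2 : E2 -> V * V) :
  (forall f, connect (@adj (Graph en2)) (en1 f).1 (en1 f).2) ->
  connected (Graph en1) -> connected (Graph en2).
Proof.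
move=> en1_connect [V0 conn1]; split=> // x y.
apply: (connect_sub _ (conn1 x y)) => a b /existsP [f /orP [] /eqP /= Ef].
- by have := en1_connect f; rewrite Ef.
- by have := en1_connect f; rewrite Ef connect_adjC.
Qed.

Lemma connected_subgraph_full (V E : finType) (en : E -> V * V) :
  connected (@subgraph (Graph en) (~: set0)) <-> connected (Graph en).
Proof.
split; apply: connected_reroute => f.
- by apply: connect1; apply/existsP; exists (val f); rewrite /= -surjective_pairing eqxx.
- by apply: connect1; apply: (@subgraph_adj_ends (Graph en)); rewrite inE in_set0.
Qed.

Lemma subgraph_agree (V E : finType) (en en' : E -> V * V) (C : {set E}) :
  {in C, en' =1 en} -> @subgraph (Graph en') C = @subgraph (Graph en) C.
Proof.
move=> eq_en; rewrite /subgraph /=; congr Graph.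
by apply: functional_extensionality => -[f /= /eq_en].
Qed.

Definition collapse (V : eqType) (uv : V * V) (z : V) : V := if z == uv.2 then uv.1 else z.

Lemma contract_map_val (G : graph) (e : gE G) (He : (ends e).1 != (ends e).2) z :
  val (cmap He z) = collapse (ends e) z.
Proof.
rewrite /cmap /collapse; case: insubP => [w Hw ->|Hz] /=; first by rewrite (negbTE Hw).
by move: Hz; rewrite negbK => ->.
Qed.

Lemma strongly_linked_same_contraction (V E : finType) (en en' : E -> V * V) (e : E)
    (He : (en e).1 != (en e).2) :
  en' e = en e ->
  (forall f, f != e -> collapse (en e) (en' f).1 = collapse (en e) (en f).1 /\
                       collapse (en e) (en' f).2 = collapse (en e) (en f).2) ->
  strongly_linked (Graph en) (Graph en').
Proof.
move=> Ee Ef; have He' : (en' e).1 != (en' e).2 by rewrite Ee.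
exists e, He, e, He'.
have to' (z : V) : z != (en e).2 -> z != (en' e).2 by rewrite Ee.
have of' (z : V) : z != (en' e).2 -> z != (en e).2 by rewrite Ee.
pose fV (z : @cV (Graph en) e) : @cV (Graph en') e := exist _ (val z) (to' _ (valP z)).
pose fV_inv (z : @cV (Graph en') e) : @cV (Graph en) e := exist _ (val z) (of' _ (valP z)).
exists fV, id; split.
- by exists fV_inv => z; apply: val_inj.
- by exists id.
- move=> [f /= fe]; left; have [E1 E2] := Ef f fe.
  by congr pair; apply: val_inj; rewrite /= !(@contract_map_val (Graph _)) /= Ee.
- by apply: val_inj; rewrite /= Ee.
Qed.

Definition redirect (V : eqType) (y x : V) (ab : V * V) : V * V :=
  if ab.1 == y then (x, ab.2) else (ab.1, x).

Lemma end_count_redirect (V : eqType) (y x z : V) ab :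
  (ab.1 == y) || (ab.2 == y) ->
  end_count z (redirect y x ab) + (y == z) = end_count z ab + (x == z).
Proof.
case: ab => a b; rewrite /end_count /redirect /=.
by case: eqP => [->|_] /= => [|/eqP ->]; case: (x == z); case: (y == z); case: (_ == z).
Qed.

Lemma redirect_nonloop (V : eqType) (x y : V) ab : x != y ->
  (ab.1 == y) || (ab.2 == y) -> (ab.1 == ab.2) || ~~ ((ab.1 == x) || (ab.2 == x)) ->
  (redirect y x ab).1 != (redirect y x ab).2.
Proof.
move=> xy; case: ab => a b; rewrite /redirect /=.
case: (eqVneq a y) => [->|ay] /=.
  by move=> _; case: (eqVneq b x) => [->|//]; rewrite (eq_sym y) (negbTE xy).
by move=> /eqP ->; case: (eqVneq a x) => [->|//]; rewrite (negbTE xy).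
Qed.

Section Swing.
Variables (V E : finType) (en : E -> V * V) (l h : E) (x y : V).

Definition swing (f : E) : V * V :=
  if f == l then (x, y) else if f == h then redirect y x (en h) else en f.

Hypotheses (Hl : en l = (x, x)) (Hhy : ((en h).1 == y) || ((en h).2 == y))
           (hl : h != l) (xy : x != y).

Lemma swing_l : swing l = (x, y).
Proof. by rewrite /swing eqxx. Qed.

Lemma swing_h : swing h = redirect y x (en h).
Proof. by rewrite /swing (negbTE hl) eqxx. Qed.

Lemma swing_other f : f != l -> f != h -> swing f = en f.
Proof. by move=> fl fh; rewrite /swing (negbTE fl) (negbTE fh). Qed.

Lemma valency_swing z : valency (G := Graph swing) z = valency (G := Graph en) z.
Proof.
rewrite !valencyE /= (bigD1 l) // [RHS](bigD1 l) //=.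
rewrite (bigD1 h) ?hl //= [in RHS](bigD1 h) ?hl //=.
rewrite !addnA swing_l swing_h Hl; congr addn.
  by move: (end_count_redirect x z Hhy); rewrite /end_count /=; lia.
by apply: eq_bigr => f /andP [fl fh]; rewrite swing_other.
Qed.

Lemma regular_swing p : regular p (Graph en) -> regular p (Graph swing).
Proof. by move=> reg z; rewrite valency_swing. Qed.

Lemma connected_swing_minus (S : {set E}) :
  connected (@subgraph (Graph en) (~: (if l \in S then h |: (S :\ l) else S))) ->
  connected (@subgraph (Graph swing) (~: S)).
Proof.
set G' := @subgraph (Graph swing) (~: S).
apply: connected_reroute => -[f /=]; rewrite inE => fS'.
have swing_adj g : g \notin S -> @adj G' (swing g).1 (swing g).2.
  by move=> gS; apply: (@subgraph_adj_ends (Graph swing)); rewrite inE.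
case: (eqVneq f l) => [->|fl]; first by rewrite Hl connect0.
case: (eqVneq f h) fS' => [->|fh] fS'; last first.
  rewrite -swing_other //; apply/connect1/swing_adj.
  by case: (l \in S) fS'; rewrite // !inE fl negb_or => /andP [].
have lS : l \notin S by apply: contraNN fS' => lS; rewrite lS setU11.
have hS : h \notin S by case: (l \in S) lS fS'.
have xy_conn : connect (@adj G') x y by have := connect1 (swing_adj _ lS); rewrite swing_l.
have := connect1 (swing_adj _ hS); rewrite swing_h /redirect.
case: eqP => [->|/eqP h1y] h_conn.
  by rewrite connect_adjC in xy_conn; apply: connect_trans xy_conn h_conn.
have -> : (en h).2 = y by move: Hhy; rewrite (negbTE h1y) => /eqP.
exact: connect_trans h_conn xy_conn.
Qed.

Lemma connected_swing : connected (Graph en) -> connected (Graph swing).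
Proof.
move=> /connected_subgraph_full conn; apply/connected_subgraph_full.
by apply: connected_swing_minus; rewrite in_set0.
Qed.

Lemma three_edge_connected_swing :
  three_edge_connected (Graph en) -> three_edge_connected (Graph swing).
Proof.
case=> V0 conn3; split=> // S S_lt3; apply/connected_swing_minus/conn3.
case: ifP => // lS; apply: leq_ltn_trans S_lt3.
by rewrite cardsU1 (cardsD1 l S) lS add1n; case: (h \notin _).
Qed.

Lemma loops_swing_lt :
  ((en h).1 == (en h).2) || ~~ (((en h).1 == x) || ((en h).2 == x)) ->
  #|loops (Graph swing)| < #|loops (Graph en)|.
Proof.
move=> h_loop_or_off_x; apply/proper_card/properP; split; last first.
  by exists l; rewrite inE /is_loop /= ?swing_l ?Hl /= ?eqxx.
apply/subsetP => f; rewrite !inE /is_loop /=.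
case: (eqVneq f l) => [->|fl]; first by rewrite swing_l /= (negbTE xy).
case: (eqVneq f h) => [->|fh]; last by rewrite swing_other.
by rewrite swing_h (negbTE (redirect_nonloop xy Hhy h_loop_or_off_x)).
Qed.

Lemma strongly_linked_swing e :
  (en e == (x, y)) || (en e == (y, x)) -> e != l -> e != h ->
  strongly_linked (Graph en) (Graph swing).
Proof.
move=> exy el eh; have He : (en e).1 != (en e).2.
  by case/orP: exy => /eqP ->; rewrite //= eq_sym.
have [ex ey] : collapse (en e) x = (en e).1 /\ collapse (en e) y = (en e).1.
  by case/orP: exy => /eqP ->; rewrite /collapse /= eqxx if_same.
apply: (strongly_linked_same_contraction He); first by rewrite swing_other.
move=> f fe; case: (eqVneq f l) => [->|fl]; first by rewrite swing_l Hl /= ex ey.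
case: (eqVneq f h) => [->|fh]; last by rewrite swing_other.
move: Hhy; rewrite swing_h /redirect; case: (en h) => a b /=.
case: (eqVneq a y) => [->|ay] /=; first by rewrite ex ey.
by move=> /eqP ->; rewrite ex ey.
Qed.

End Swing.

Definition swing_invariant (Q : graph -> Prop) : Prop :=
  forall (V E : finType) (en : E -> V * V) (l h : E) (x y : V),
    en l = (x, x) -> ((en h).1 == y) || ((en h).2 == y) -> h != l -> x != y ->
    Q (Graph en) -> Q (Graph (swing en l h x y)).

Lemma swing_invariant_connected : swing_invariant connected.
Proof. by move=> V E en l h x y *; apply: connected_swing. Qed.

Lemma swing_invariant_three_edge_connected : swing_invariant three_edge_connected.
Proof. by move=> V E en l h x y *; apply: three_edge_connected_swing. Qed.

Section HamiltonCycle.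
Variables (V E : finType) (en : E -> V * V) (C : {set E}) (p : nat).
Hypotheses (reg_p : regular p (Graph en)) (cycle2 : regular 2 (@subgraph (Graph en) C))
           (cycle_conn : connected (@subgraph (Graph en) C)) (V_gt1 : 1 < #|V|).

Lemma cycle_edge_at x :
  exists e, [/\ e \in C, (en e).1 != (en e).2 & ((en e).1 == x) || ((en e).2 == x)].
Proof.
pose P e := [&& e \in C, (en e).1 != (en e).2 & ((en e).1 == x) || ((en e).2 == x)].
have [e /and3P [] | none] := pickP P; first by exists e.
have [y yx] : exists y, y != x.
  have [a [b [_ _ ab]]] := card_gt1P V_gt1.
  by case: (eqVneq a x) => [ax|]; [exists b; rewrite -ax eq_sym | exists a].
have closed_x : closed (@adj (@subgraph (Graph en) C)) (pred1 x).
  move=> u v /existsP [[f fC] /= /orP [] /eqP Ef]; move: (none f); rewrite /P fC Ef /= !inE;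
    by case: (eqVneq u v) => [->|_] //= /negbT /norP [/negbTE -> /negbTE ->].
have := closed_connect closed_x (cycle_conn.2 x y).
by rewrite !inE eqxx (negbTE yx).
Qed.

Lemma loop_notin_cycle l : (en l).1 == (en l).2 -> l \notin C.
Proof.
move=> /eqP l_loop; apply/negP => lC.
have [e [eC e_nonloop]] := cycle_edge_at (en l).1; rewrite -end_count_gt0 => e_at.
have el : e != l by apply: contraNneq e_nonloop => ->; rewrite l_loop.
have := cycle2 (en l).1; rewrite valency_subgraph (bigD1 l) //=.
rewrite (bigD1 e) /=; last by rewrite eC el.
have loop2 : end_count (en l).1 (en l) = 2 by rewrite /end_count l_loop eqxx.
by rewrite loop2; lia.
Qed.

Lemma off_cycle_valency z : \sum_(f | f \notin C) end_count z (en f) + 2 = p.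
Proof.
have := reg_p z; rewrite valencyE (bigID (mem C)) /= addnC => <-.
by rewrite -(cycle2 z) valency_subgraph.
Qed.

Lemma redirectable_edge l x y : en l = (x, x) -> x != y ->
  exists h, [/\ h \notin C, ((en h).1 == y) || ((en h).2 == y)
              & ((en h).1 == (en h).2) || ~~ (((en h).1 == x) || ((en h).2 == x))].
Proof.
move=> Hl xy.
pose P h := [&& h \notin C, ((en h).1 == y) || ((en h).2 == y)
              & ((en h).1 == (en h).2) || ~~ (((en h).1 == x) || ((en h).2 == x))].
have [h /and3P [] | none] := pickP P; first by exists h.
have lC : l \notin C by apply: loop_notin_cycle; rewrite Hl.
suff : \sum_(f | f \notin C) end_count y (en f) + 2 <= \sum_(f | f \notin C) end_count x (en f).
  by have := off_cycle_valency x; have := off_cycle_valency y; lia.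
have [lx ly] : end_count x (en l) = 2 /\ end_count y (en l) = 0.
  by rewrite Hl /end_count /= eqxx (negbTE xy).
rewrite (bigD1 l lC) [X in _ <= X](bigD1 l lC) /= lx ly add0n addnC leq_add2l.
apply: leq_sum => f /andP [fC _]; have := none f; rewrite /P fC /= -!end_count_gt0.
case: posnP => [-> //|y_at] /= /negbT /norP [/(end_count_nonloop y) y_le1].
by rewrite negbK; lia.
Qed.

Lemma swing_step (Q : graph -> Prop) l : swing_invariant Q -> Q (Graph en) ->
  (en l).1 == (en l).2 ->
  exists en' : E -> V * V,
    [/\ strongly_linked (Graph en) (Graph en'), Q (Graph en'), regular p (Graph en'),
        {in C, en' =1 en} & #|loops (Graph en')| < #|loops (Graph en)|].
Proof.
move=> HQ Qen l_loop; have lC := loop_notin_cycle l_loop.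
set x := (en l).1; have Hl : en l = (x, x) by rewrite [en l]surjective_pairing -(eqP l_loop).
have [e [eC e_nonloop e_at]] := cycle_edge_at x.
set y := if (en e).1 == x then (en e).2 else (en e).1.
have exy : (en e == (x, y)) || (en e == (y, x)).
  move: e_at; rewrite /y; case: (en e) => a b /=.
  by case: (eqVneq a x) => [->|_] /= => [|/eqP ->]; rewrite eqxx ?orbT.
have xy : x != y by case/orP: exy e_nonloop => /eqP -> //=; rewrite eq_sym.
have [h [hC hy h_off]] := redirectable_edge Hl xy.
have hl : h != l by apply: contraTneq hy => ->; rewrite Hl /= orbb.
have el : e != l by apply: contraNneq lC => <-.
have eh : e != h by apply: contraNneq hC => <-.
exists (swing en l h x y); split.
- exact: strongly_linked_swing exy el eh.
- exact: HQ.
- exact: regular_swing.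
- by move=> f fC; apply: swing_other; [apply: contraNneq lC | apply: contraNneq hC] => <-.
- exact: loops_swing_lt.
Qed.

End HamiltonCycle.

Lemma chain_last (P : graph -> Prop) (G H : graph) : chain P G H -> P H.
Proof. by elim. Qed.

Lemma swing_to_loopless (Q : graph -> Prop) (V E : finType) (C : {set E}) (p : nat) :
  swing_invariant Q -> 1 < #|V| -> forall en : E -> V * V,
  regular p (Graph en) -> regular 2 (@subgraph (Graph en) C) ->
  connected (@subgraph (Graph en) C) -> Q (Graph en) ->
  exists2 en' : E -> V * V, chain Q (Graph en) (Graph en') &
    [/\ loopless (Graph en'), regular p (Graph en') & {in C, en' =1 en}].
Proof.
move=> HQ V_gt1 en; have [n] := ubnP #|loops (Graph en)|.
elim: n en => // n IH en loops_lt reg cycle2 cycle_conn Qen.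
have [no_loops | [l]] := set_0Vmem (loops (Graph en)).
  exists en; first exact: chain_refl.
  by split=> // f; apply/negP => f_loop; have := in_set0 f; rewrite -no_loops inE f_loop.
rewrite inE => l_loop.
have [en' [link Qen' reg' agree fewer]] := swing_step reg cycle2 cycle_conn V_gt1 HQ Qen l_loop.
have [|||en'' chain'' [loopless'' reg'' agree'']] := IH en' _ reg' _ _ Qen'.
- exact: leq_trans fewer _.
- by rewrite (subgraph_agree agree).
- by rewrite (subgraph_agree agree).
exists en''; first exact: chain_step Qen link chain''.
by split=> // f fC; rewrite agree'' ?agree.
Qed.

Lemma p_hamiltonian_chain (Q : graph -> Prop) (p : nat) (G : graph) :
  swing_invariant Q -> regular p G -> hamiltonian G -> Q G ->
  exists H : graph, Q H /\ p_hamiltonian p H /\ chain Q G H.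
Proof.
case: G => V E en HQ reg [V_gt1 [C [cycle_conn cycle2]]] QG.
have [en' chain_en' [loopless' reg' agree]] :=
  swing_to_loopless HQ V_gt1 reg cycle2 cycle_conn QG.
exists (Graph en'); split; first exact: chain_last chain_en'.
by do 4!split=> //; exists C; rewrite (subgraph_agree agree).
Qed.

Theorem mainTheorem3 (p : nat) (hp : 3 <= p) :
  (forall G : graph, connected G -> regular p G -> hamiltonian G ->
     exists H : graph, connected H /\ p_hamiltonian p H /\ linked G H) /\
  (forall G : graph, connected G -> regular p G -> hamiltonian G ->
     three_edge_connected G ->
     exists H : graph, three_edge_connected H /\ p_hamiltonian p H /\
                       three_linked G H).
Proof.
split=> [G conn reg ham | G _ reg ham conn3].
- exact: p_hamiltonian_chain swing_invariant_connected reg ham conn.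
- exact: p_hamiltonian_chain swing_invariant_three_edge_connected reg ham conn3.
Qed.
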